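(* Let $d\ge 2$ and let $g:[-1,1]\to(-\infty,\infty]$ be a function that is finite and continuous on $[-1,1)$ with $g(1)=\lim_{t\to1^-}g(t)$, differentiable on $(-1,1)$, and such that $g''$ exists and is non-negative and convex on $(-1,1)$. Let $\omega_{2d}$ be any antipodal configuration of $2d$ points on $S^{d-1}$, and let $\overline\omega_{2d}=\{\pm\mathbf a_1,\ldots,\pm\mathbf a_d\}$, where $\{\mathbf a_1,\dots,\mathbf a_d\}$ is an orthonormal basis of $\mathbb R^d$. Then $$P^g(\omega_{2d},S^{d-1})\leq P^g(\overline\omega_{2d},S^{d-1})=d\left(g\left(\tfrac1{\sqrt d}\right)+g\left(-\tfrac1{\sqrt d}\right)\right).$$
   Context: $S^{d-1}$ is the unit sphere in $\mathbb R^d$. A configuration is a list of points (points may coincide); it is antipodal if together with $\mathbf x$ it contains $-\mathbf x$. For a configuration $\omega_N=\{\mathbf x_1,\ldots,\mathbf x_N\}\subset S^{d-1}$, $P^g(\omega_N,S^{d-1}):=\min_{\mathbf x\in S^{d-1}}\sum_{i=1}^N g(\mathbf x\cdot\mathbf x_i)$. *)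

From HB Require Import structures.
From mathcomp Require Import all_boot all_order all_algebra.
From mathcomp Require Import all_classical all_reals all_analysis.
Set Implicit Arguments. Unset Strict Implicit. Unset Printing Implicit Defensive.
Import Order.TTheory GRing.Theory Num.Theory.
Import numFieldNormedType.Exports.
Local Open Scope classical_set_scope.
Local Open Scope ring_scope.

Definition dotv (R : realType) (d : nat) (u v : 'rV[R]_d) : R :=
  \sum_(k < d) u 0 k * v 0 k.

Definition sphere (R : realType) (d : nat) : set 'rV[R]_d :=
  [set x | dotv x x = 1].

Definition on_sphere (R : realType) (d N : nat) (w : 'I_N -> 'rV[R]_d) :=
  forall i, w i \in @sphere R d.

(* antipodal: as a multiset, the configuration equals its negative *)
Definition antipodal (R : realType) (d N : nat) (w : 'I_N -> 'rV[R]_d) :=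
  exists s : 'I_N -> 'I_N, bijective s /\ forall i, w (s i) = - w i.

(* P^g(w, S^{d-1}) = min over x in S^{d-1} of sum_i g(x . x_i)
   (stated as an infimum in the extended reals) *)
Definition Pg (R : realType) (d N : nat) (g : R -> \bar R)
    (w : 'I_N -> 'rV[R]_d) : \bar R :=
  ereal_inf [set (\sum_(i < N) g (dotv x (w i)))%E | x in @sphere R d].

Definition convex_on_oo (R : realType) (a b : R) (h : R -> R) :=
  forall x y l : R, a < x < b -> a < y < b -> 0 <= l <= 1 ->
    h (l * x + (1 - l) * y) <= l * h x + (1 - l) * h y.

Definition cross_config (R : realType) (d : nat) (a : 'I_d -> 'rV[R]_d)
  : 'I_(d + d) -> 'rV[R]_d :=
  fun i => match fintype.split i with inl j => a j | inr j => - a j end.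

From HB Require Import structures.
From mathcomp Require Import all_boot all_order all_algebra.
From mathcomp Require Import all_classical all_reals all_analysis.
From mathcomp Require Import ring lra.
Import Order.TTheory GRing.Theory Num.Theory.
Import numFieldNormedType.Exports.
Local Open Scope classical_set_scope.
Local Open Scope ring_scope.

(* Put h(t) = g(t) + g(-t) and s = 1/sqrt d.  As g'' is nonnegative and convex,
   h is nondecreasing on [0,1) and h'(t)/t is nondecreasing on (0,1); the latter
   says that u |-> h(sqrt u) is convex, whence the tangent bound
   h(t) >= h(s) + h'(s)/(2s) (t^2 - s^2), extended to t = 1 by continuity.
   For the cross configuration, summing this bound over t_j = x . a_j, where
   sum_j t_j^2 = 1 = d s^2, gives P^g >= d h(s), attained at x = s (a_1 + ... + a_d).
   An antipodal configuration is {+-b_1, ..., +-b_d} with unit vectors b_j, and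
   some unit x has |x . b_j| <= s for all j: take x orthogonal to the b_j if they
   are dependent, and otherwise x proportional to a signed sum of the dual basis
   whose norm is at least sqrt d.  Monotonicity of h then bounds the potential at
   x by d h(s). *)

Section InnerProduct.
Context {R : realType} {n : nat}.
Implicit Types u v x : 'rV[R]_n.

Lemma dotvC u v : dotv u v = dotv v u.
Proof. by apply: eq_bigr => k _; rewrite mulrC. Qed.

Lemma dotvDl u v x : dotv (u + v) x = dotv u x + dotv v x.
Proof. by rewrite /dotv -big_split; apply: eq_bigr => k _; rewrite !mxE mulrDl. Qed.

Lemma dotvZl (a : R) u x : dotv (a *: u) x = a * dotv u x.
Proof. by rewrite /dotv mulr_sumr; apply: eq_bigr => k _; rewrite !mxE mulrA. Qed.

Lemma dotvNl u x : dotv (- u) x = - dotv u x.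
Proof. by rewrite -scaleN1r dotvZl mulN1r. Qed.

Lemma dotvDr u v x : dotv x (u + v) = dotv x u + dotv x v.
Proof. by rewrite dotvC dotvDl !(dotvC x). Qed.

Lemma dotvZr (a : R) u x : dotv x (a *: u) = a * dotv x u.
Proof. by rewrite dotvC dotvZl dotvC. Qed.

Lemma dotvNr u x : dotv x (- u) = - dotv x u.
Proof. by rewrite dotvC dotvNl dotvC. Qed.

Lemma dotv0l x : dotv 0 x = 0.
Proof. by rewrite /dotv big1 // => k _; rewrite mxE mul0r. Qed.

Lemma dotv_suml (I : finType) (F : I -> 'rV[R]_n) x :
  dotv (\sum_i F i) x = \sum_i dotv (F i) x.
Proof.
rewrite /dotv exchange_big /=; apply: eq_bigr => k _.
by rewrite summxE mulr_suml.
Qed.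

Lemma dotv_mulmx u v : dotv u v = (u *m v^T) 0 0.
Proof. by rewrite !mxE; apply: eq_bigr => k _; rewrite !mxE. Qed.

Lemma dotv_ge0 u : 0 <= dotv u u.
Proof. by rewrite sumr_ge0 // => k _; rewrite -expr2 sqr_ge0. Qed.

Lemma dotv_gt0 u : u != 0 -> 0 < dotv u u.
Proof.
apply: contraNT; rewrite lt_def dotv_ge0 andbT negbK /dotv.
rewrite psumr_eq0 => [/allP u0|k _]; last by rewrite -expr2 sqr_ge0.
apply/eqP/rowP => k; rewrite mxE.
by apply/eqP; rewrite -sqrf_eq0 expr2; apply: u0 (mem_index_enum k).
Qed.

Lemma dotv_self_ge1 u v : dotv u u = 1 -> dotv u v = 1 -> 1 <= dotv v v.
Proof.
move=> uu uv; have := dotv_ge0 (v - u).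
by rewrite !(dotvDl, dotvDr, dotvNl, dotvNr) uu uv dotvC uv; lra.
Qed.

Lemma unit_rescale v : 0 < dotv v v -> exists x,
  dotv x x = 1 /\ forall u, dotv x u = (Num.sqrt (dotv v v))^-1 * dotv v u.
Proof.
move=> vv_gt0; exists ((Num.sqrt (dotv v v))^-1 *: v).
split=> [|u]; last by rewrite dotvZl.
rewrite dotvZl dotvZr mulrA -invfM -expr2 sqr_sqrtr ?ltW //.
by rewrite mulVf // gt_eqF.
Qed.

End InnerProduct.

Lemma orthonormal_parseval {R : realType} {n : nat} (a : 'I_n -> 'rV[R]_n) x :
  (forall i j, dotv (a i) (a j) = (i == j)%:R) ->
  \sum_i dotv x (a i) ^+ 2 = dotv x x.
Proof.
move=> aa; pose A := \matrix_i a i.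
have AAt : A *m A^T = 1%:M.
  by apply/matrixP => i j; rewrite !mxE -aa; apply: eq_bigr => k _; rewrite !mxE.
have xAt i : (x *m A^T) 0 i = dotv x (a i).
  by rewrite !mxE; apply: eq_bigr => k _; rewrite !mxE.
transitivity (dotv (x *m A^T) (x *m A^T)).
  by apply: eq_bigr => i _; rewrite -expr2 xAt.
by rewrite !dotv_mulmx trmx_mul trmxK -!mulmxA (mulmxA A^T) (mulmx1C AAt) mul1mx.
Qed.

Lemma signed_sum_dotv_ge {R : realType} {n m : nat} (F : 'I_m -> 'rV[R]_n) :
  exists2 y : 'I_m -> R, forall k, `|y k| = 1 &
    \sum_k dotv (F k) (F k) <= dotv (\sum_k y k *: F k) (\sum_k y k *: F k).
Proof.
elim: m F => [|m IHm] F.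
  by exists (fun=> 1) => [k|]; [rewrite normr1|rewrite big_ord0 dotv_ge0].
have [y' y'_sign le_y'] := IHm (fun k => F (lift ord0 k)).
set S := \sum_k y' k *: _ in le_y'.
pose sg : R := if 0 <= dotv (F ord0) S then 1 else -1.
have sg_dotv_ge0 : 0 <= sg * dotv (F ord0) S.
  rewrite /sg; case: ifP => [|/negbT]; rewrite ?mul1r //.
  by rewrite mulN1r oppr_ge0 -ltNge => /ltW.
have sgsg : sg * sg = 1 by rewrite /sg; case: ifP; rewrite ?mulr1 ?mulrNN ?mulr1.
exists (fun k => if unlift ord0 k is Some k' then y' k' else sg) => [k|].
  case: unlift => [k'|]; first exact: y'_sign.
  by rewrite /sg; case: ifP; rewrite ?normrN normr1.
rewrite !big_ord_recl /= unlift_none.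
rewrite (eq_bigr (fun k => y' k *: F (lift ord0 k))) => [|k _]; last by rewrite liftK.
rewrite -/S dotvDl !dotvDr !dotvZl !dotvZr (dotvC S (F ord0)) mulrA sgsg mul1r.
lra.
Qed.

Section SmallInnerProducts.
Context {R : realType} {n : nat} {b : 'I_n -> 'rV[R]_n}.

Lemma unit_orthogonal_of_det0 : \det (\matrix_j b j) = 0 ->
  exists x, dotv x x = 1 /\ forall j, dotv x (b j) = 0.
Proof.
rewrite -det_tr => /eqP/det0P[v /dotv_gt0/(unit_rescale v)[x [xx xv]] vb0].
exists x; split=> // j; rewrite xv.
have /rowP/(_ j) := vb0; rewrite !mxE => vbj.
suff -> : dotv v (b j) = 0 by rewrite mulr0.
by rewrite -vbj; apply: eq_bigr => k _; rewrite !mxE.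
Qed.

Lemma dual_family : \det (\matrix_j b j) != 0 ->
  exists c : 'I_n -> 'rV[R]_n, forall i j, dotv (b i) (c j) = (i == j)%:R.
Proof.
rewrite -unitfE -unitmxE => B_unit.
exists (fun j => row j (invmx (\matrix_j b j))^T) => i j.
have /matrixP/(_ i j) := mulmxV B_unit; rewrite !mxE => <-.
by apply: eq_bigr => k _; rewrite !mxE.
Qed.

Lemma exists_unit_dotv_small : (0 < n)%N -> (forall j, dotv (b j) (b j) = 1) ->
  exists x, dotv x x = 1 /\ forall j, `|dotv x (b j)| <= (Num.sqrt n%:R)^-1.
Proof.
move=> n_gt0 bb; have [/unit_orthogonal_of_det0[x [xx xb]]|/dual_family[c bc]] :=
  eqVneq (\det (\matrix_j b j)) 0.
  by exists x; split=> // j; rewrite xb normr0 invr_ge0 sqrtr_ge0.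
have [y y_sign] := signed_sum_dotv_ge c; set z := \sum_k y k *: _ => le_zz.
have zb j : dotv z (b j) = y j.
  rewrite dotv_suml (bigD1 j) //= dotvZl dotvC bc eqxx mulr1 big1 ?addr0 // => k kj.
  by rewrite dotvZl dotvC bc eq_sym (negbTE kj) mulr0.
have n_le_zz : n%:R <= dotv z z.
  apply: le_trans le_zz; rewrite -[n in n%:R]card_ord -sumr_const.
  by apply: ler_sum => j _; apply: dotv_self_ge1 (bb j) _; rewrite bc eqxx.
have zz_gt0 : 0 < dotv z z by apply: lt_le_trans n_le_zz; rewrite ltr0n.
have [x [xx xz]] := unit_rescale _ zz_gt0.
exists x; split=> // j; rewrite xz zb normrM y_sign mulr1.
rewrite ger0_norm ?invr_ge0 ?sqrtr_ge0 // lef_pV2 ?posrE ?sqrtr_gt0 ?ltr0n //.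
by rewrite ler_sqrt ?dotv_ge0.
Qed.

End SmallInnerProducts.

Lemma antipodal_seq_halves {V : zmodType} {m : nat} {l : seq V} :
  size l = (m + m)%N -> {in l, forall v, - v != v} -> perm_eq l (map -%R l) ->
  exists b : seq V,
    [/\ size b = m, {subset b <= l} & {in l, forall v, v \in b \/ - v \in b}].
Proof.
elim: m l => [|m IHm] [|v l] //=; first by exists [::].
rewrite addSn addnS => -[size_l] l_sym l_perm.
have Nv_l : - v \in l.
  have := mem_head (- v) (map -%R l); rewrite -map_cons -(perm_mem l_perm).
  by rewrite in_cons (negbTE (l_sym v (mem_head v l))).
have l_rem := perm_to_rem Nv_l; set l' := rem (- v) l in l_rem.
have l'_l : {subset l' <= l} by move=> u /mem_rem.
have l'_perm : perm_eq l' (map -%R l').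
  have vl_rem : perm_eq (v :: l) [:: v, - v & l'] by rewrite perm_cons.
  move: l_perm; rewrite (permPl vl_rem) (permPr (perm_map -%R vl_rem)) /=.
  by rewrite opprK perm_sym (perm_catCA [:: - v] [:: v]) !perm_cons perm_sym.
have size_l' : size l' = (m + m)%N by rewrite size_rem // size_l.
have l'_sym : {in l', forall u, - u != u}.
  by move=> u /l'_l u_l; apply: l_sym; rewrite in_cons u_l orbT.
have [b [size_b b_l' l'_b]] := IHm l' size_l' l'_sym l'_perm.
exists (v :: b); split=> [|u|u]; rewrite ?in_cons /=.
- by rewrite size_b.
- by case/orP=> [/eqP->|/b_l'/l'_l->]; rewrite ?eqxx ?orbT.
case/orP=> [/eqP->|]; first by left; rewrite eqxx.
rewrite (perm_mem l_rem) in_cons => /orP[/eqP->|/l'_b[]->]; rewrite ?orbT; auto.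
by right; rewrite opprK eqxx.
Qed.

Lemma antipodal_pairs {R : realType} {n m : nat} {w : 'I_(m + m) -> 'rV[R]_n} :
  (forall i, w i != 0) -> antipodal w ->
  exists b : 'I_m -> 'rV[R]_n,
    (forall j, exists i, b j = w i) /\ forall i, exists j, w i = b j \/ w i = - b j.
Proof.
move=> w_neq0 [s [s_bij ws]].
have w_sym : {in codom w, forall v, - v != v}.
  move=> _ /codomP[i ->]; apply: contra_neq (w_neq0 i) => Nwi.
  by apply/rowP => k; have /rowP/(_ k) := Nwi; rewrite !mxE; lra.
have w_perm : perm_eq (codom w) (map -%R (codom w)).
  have enum_s : perm_eq (enum 'I_(m + m)) (map s (enum 'I_(m + m))).
    apply: uniq_perm => [||i]; first exact: enum_uniq.
      by rewrite map_inj_uniq ?enum_uniq //; apply: bij_inj.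
    by case: s_bij => s' _ ss'; rewrite mem_enum -[i]ss' map_f ?mem_enum.
  have -> : map -%R (codom w) = map w (map s (enum 'I_(m + m))).
    by rewrite codomE -!map_comp; apply: eq_map => i /=; rewrite ws.
  by rewrite codomE perm_map.
have size_w : size (codom w) = (m + m)%N by rewrite size_codom card_ord.
have [b [size_b b_w w_b]] := antipodal_seq_halves size_w w_sym w_perm.
exists (fun j => nth 0 b j); split=> [j|i].
  by apply/codomP/b_w/mem_nth; rewrite size_b.
have index_lt v : v \in b -> (index v b < m)%N by rewrite -index_mem size_b.
have [wi_b|Nwi_b] := w_b _ (codom_f w i).
  by exists (Ordinal (index_lt _ wi_b)); left; rewrite nth_index.
by exists (Ordinal (index_lt _ Nwi_b)); right; rewrite nth_index ?opprK.
Qed.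

Section SymmetricSum.
Context {R : realType}.
Implicit Types (f : R -> R) (t : R).

Definition sym_sum f t := f t + f (- t).
Definition sym_diff f t := f t - f (- t).

Lemma sym_sumN f t : sym_sum f (- t) = sym_sum f t.
Proof. by rewrite /sym_sum opprK addrC. Qed.

Lemma sym_sum_norm f t : sym_sum f `|t| = sym_sum f t.
Proof.
by have [/ger0_norm->|t_lt0] := lerP 0 t; last rewrite ltr0_norm // sym_sumN.
Qed.

Lemma sym_diff0 f : sym_diff f 0 = 0.
Proof. by rewrite /sym_diff oppr0 subrr. Qed.

Lemma is_derive_reflect f t : derivable f (- t) 1 ->
  is_derive t 1 (fun x => f (- x)) (- derive1 f (- t)).
Proof.
move=> /derivableP; rewrite -derive1E => df.
by apply: is_derive_eq (is_derive1_comp df (is_deriveNid t 1)) _; rewrite mulrN1.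
Qed.

Lemma is_derive_sym_sum f t : derivable f t 1 -> derivable f (- t) 1 ->
  is_derive t 1 (sym_sum f) (sym_diff (derive1 f) t).
Proof.
move=> /derivableP; rewrite -derive1E => df /is_derive_reflect dfN.
exact: is_deriveD df dfN.
Qed.

Lemma is_derive_sym_diff f t : derivable f t 1 -> derivable f (- t) 1 ->
  is_derive t 1 (sym_diff f) (sym_sum (derive1 f) t).
Proof.
move=> /derivableP; rewrite -derive1E => df /is_derive_reflect dfN.
by rewrite /sym_sum -[derive1 f (- t)]opprK; exact: is_deriveB df dfN.
Qed.

Lemma sym_sum_convex_mono f : convex_on_oo (-1) 1 f ->
  forall t u, 0 <= t <= u -> u < 1 -> sym_sum f t <= sym_sum f u.
Proof.
move=> f_convex t u /andP[t_ge0 le_tu] u_lt1.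
have [u0|u_neq0] := eqVneq u 0; first by have -> : t = u by lra.
have u_gt0 : 0 < u by rewrite lt_def u_neq0 (le_trans t_ge0).
have u11 : -1 < u < 1 by apply/andP; split; lra.
have Nu11 : -1 < - u < 1 by apply/andP; split; lra.
(* t and -t are mirror-image convex combinations of u and -u. *)
pose l := (t + u) / (2 * u).
have l01 : 0 <= l <= 1.
  by apply/andP; split; rewrite /l ?ler_pdivrMr ?divr_ge0 ?mulr_gt0; lra.
have := f_convex _ _ _ u11 Nu11 l01; have := f_convex _ _ _ Nu11 u11 l01.
have -> : l * - u + (1 - l) * u = - t by rewrite /l; field; lra.
have -> : l * u + (1 - l) * - u = t by rewrite /l; field; lra.
rewrite /sym_sum; lra.
Qed.

End SymmetricSum.

Lemma MVT_inside {R : realType} {f df : R -> R} {l r a b : R} :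
  l < a -> a < b -> b < r -> (forall x, l < x < r -> is_derive x 1 f (df x)) ->
  exists2 c : R, a < c < b & f b - f a = df c * (b - a).
Proof.
move=> l_a a_b b_r f_df.
have lr x : a <= x <= b -> l < x < r by move=> /andP[? ?]; apply/andP; split; lra.
have f_df_ab x : x \in `]a, b[ -> is_derive x 1 f (df x).
  by rewrite in_itv /= => /andP[? ?]; apply/f_df/lr/andP; split; lra.
have f_cont : {within `[a, b], continuous f}.
  apply: derivable_within_continuous => x; rewrite in_itv /= => /lr/f_df.
  by case.
by have [c] := MVT a_b f_df_ab f_cont; rewrite in_itv /=; exists c.
Qed.

Section TwiceDifferentiable.
Context {R : realType} {G : R -> R}.
Hypothesis G_derivable : forall t : R, -1 < t < 1 -> derivable G t 1.
Hypothesis dG_derivable : forall t : R, -1 < t < 1 -> derivable (derive1 G) t 1.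
Hypothesis d2G_ge0 : forall t : R, -1 < t < 1 -> 0 <= derive1n 2 G t.
Hypothesis d2G_convex : convex_on_oo (-1) 1 (derive1n 2 G).

Let in11N (t : R) : -1 < t < 1 -> -1 < - t < 1.
Proof. by move=> /andP[? ?]; apply/andP; split; lra. Qed.

Lemma sym_sum_derive (t : R) : -1 < t < 1 ->
  is_derive t 1 (sym_sum G) (sym_diff (derive1 G) t).
Proof.
by move=> t11; apply: is_derive_sym_sum; apply: G_derivable => //; apply: in11N.
Qed.

Lemma sym_diff_derive (t : R) : -1 < t < 1 ->
  is_derive t 1 (sym_diff (derive1 G)) (sym_sum (derive1n 2 G) t).
Proof.
by move=> t11; apply: is_derive_sym_diff; apply: dG_derivable => //; apply: in11N.
Qed.

Lemma sym_diff_MVT0 (c : R) : 0 < c < 1 ->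
  exists2 e : R, 0 < e < c & sym_diff (derive1 G) c = sym_sum (derive1n 2 G) e * c.
Proof.
move=> /andP[c_gt0 c_lt1].
have [e e_0c] := MVT_inside (ltrN10 R) c_gt0 c_lt1 sym_diff_derive.
by rewrite sym_diff0 !subr0; exists e.
Qed.

Lemma sym_diff_ge0 (c : R) : 0 <= c < 1 -> 0 <= sym_diff (derive1 G) c.
Proof.
move=> /andP[c_ge0 c_lt1]; have [->|c_neq0] := eqVneq c 0; first by rewrite sym_diff0.
have [|e /andP[e_gt0 e_lt_c] ->] := sym_diff_MVT0 c.
  by rewrite lt_def c_neq0 c_ge0.
by rewrite mulr_ge0 // addr_ge0 ?d2G_ge0 ?in11N //; apply/andP; split; lra.
Qed.

Lemma sym_sum_mono (a b : R) : 0 <= a <= b -> b < 1 -> sym_sum G a <= sym_sum G b.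
Proof.
move=> /andP[a_ge0 a_le_b] b_lt1; have [->//|a_neq_b] := eqVneq a b.
have a_lt_b : a < b by rewrite lt_neqAle a_neq_b.
have [e /andP[a_e e_b] E] :=
  MVT_inside (lt_le_trans (ltrN10 R) a_ge0) a_lt_b b_lt1 sym_sum_derive.
rewrite -subr_ge0 E; apply: mulr_ge0; last by rewrite subr_ge0.
by apply: sym_diff_ge0; apply/andP; split; lra.
Qed.

Lemma sym_diff_ratio_mono (a b : R) : 0 < a <= b -> b < 1 ->
  sym_diff (derive1 G) a / a <= sym_diff (derive1 G) b / b.
Proof.
move=> /andP[a_gt0 a_le_b] b_lt1; have [->//|a_neq_b] := eqVneq a b.
have a_lt_b : a < b by rewrite lt_neqAle a_neq_b.
have [|e1 /andP[e1_gt0 e1_a] Ea] := sym_diff_MVT0 a; first by apply/andP; split; lra.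
have [e2 /andP[a_e2 e2_b] Eb] :=
  MVT_inside (lt_trans (ltrN10 R) a_gt0) a_lt_b b_lt1 sym_diff_derive.
have d2_le : sym_sum (derive1n 2 G) e1 <= sym_sum (derive1n 2 G) e2.
  apply: (sym_sum_convex_mono _ d2G_convex); last exact: lt_trans e2_b b_lt1.
  by rewrite !ltW // (lt_trans e1_a a_e2).
rewrite Ea mulfK ?gt_eqF // ler_pdivlMr ?(lt_trans a_gt0) //.
move: Eb; rewrite Ea => /eqP; rewrite subr_eq => /eqP->.
move: d2_le; set p1 := sym_sum _ e1; set p2 := sym_sum _ e2 => d2_le.
rewrite -subr_ge0 (_ : _ - _ = (p2 - p1) * (b - a)); last by ring.
by rewrite mulr_ge0 // subr_ge0 // ltW.
Qed.

Lemma sym_sum_tangent (s t : R) : 0 < s < 1 -> -1 < t < 1 ->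
  sym_sum G s + sym_diff (derive1 G) s / (2 * s) * (t ^+ 2 - s ^+ 2) <= sym_sum G t.
Proof.
move=> /andP[s_gt0 s_lt1] t11.
wlog t_ge0 : t t11 / 0 <= t => [tangent|].
  have [|t_lt0] := lerP 0 t; first exact: tangent.
  rewrite -(sym_sumN G t) -(sqrrN t); apply: tangent; first exact: in11N.
  by rewrite oppr_ge0 ltW.
set m := sym_diff (derive1 G) s / (2 * s).
pose phi (x : R) := sym_sum G x - m * x ^+ 2.
suff : phi s <= phi t by rewrite /phi; lra.
have dphi (x : R) : -1 < x < 1 ->
    is_derive x 1 phi (sym_diff (derive1 G) x - m * (2 * x)).
  move=> x11.
  have := is_deriveB (sym_sum_derive _ x11)
    (is_deriveZ m (is_deriveX 2 (is_derive_id x 1))).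
  set F := (X in is_derive _ _ X _) => dF.
  have -> : phi = F by apply/funext => y.
  by apply: is_derive_eq dF _; rewrite expr1 /GRing.scale /= mulr1.
have dphi_sign (x : R) : 0 < x < 1 ->
    0 <= (x - s) * (sym_diff (derive1 G) x - m * (2 * x)).
  move=> /andP[x_gt0 x_lt1].
  have -> : sym_diff (derive1 G) x - m * (2 * x) =
      x * (sym_diff (derive1 G) x / x - sym_diff (derive1 G) s / s).
    by rewrite /m; field; rewrite !gt_eqF.
  rewrite mulrCA; apply: mulr_ge0; first exact: ltW.
  have [x_le_s|s_le_x] := lerP x s.
    apply: mulr_le0; rewrite subr_le0 //.
    by apply: (sym_diff_ratio_mono x s); rewrite ?x_gt0.
  apply: mulr_ge0; rewrite subr_ge0; first exact: ltW.
  by apply: (sym_diff_ratio_mono s x); rewrite ?s_gt0 ?ltW.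
have t_lt1 : t < 1 by case/andP: t11.
have [t_lt_s|s_lt_t|->//] := ltgtP t s.
  have [e /andP[t_e e_s] E] :=
    MVT_inside (lt_le_trans (ltrN10 R) t_ge0) t_lt_s s_lt1 dphi.
  have /dphi_sign : 0 < e < 1 by apply/andP; split; lra.
  rewrite nmulr_rge0 ?subr_lt0 // => dphi_le0.
  by rewrite -subr_le0 E mulr_le0_ge0 // subr_ge0 ltW.
have [e /andP[s_e e_t] E] := MVT_inside (lt_trans (ltrN10 R) s_gt0) s_lt_t t_lt1 dphi.
have /dphi_sign : 0 < e < 1 by apply/andP; split; lra.
rewrite pmulr_rge0 ?subr_gt0 // => dphi_ge0.
by rewrite -subr_ge0 E mulr_ge0 // subr_ge0 ltW.
Qed.

End TwiceDifferentiable.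

Lemma Pg_le_sum {R : realType} {n N : nat} (g : R -> \bar R) (w : 'I_N -> 'rV[R]_n) x :
  dotv x x = 1 -> (Pg g w <= \sum_(i < N) g (dotv x (w i)))%E.
Proof. by move=> xx; apply: ereal_inf_lbound; exists x. Qed.

Lemma Pg_ge {R : realType} {n N : nat} (g : R -> \bar R) (w : 'I_N -> 'rV[R]_n)
    (v : \bar R) :
  (forall x, dotv x x = 1 -> (v <= \sum_(i < N) g (dotv x (w i)))%E) -> (v <= Pg g w)%E.
Proof. by move=> v_le; apply: le_ereal_inf_tmp => _ [x xx <-]; apply: v_le. Qed.

Lemma inv_sqrt_nat_gt0_lt1 {R : rcfType} {d : nat} : (1 < d)%N ->
  0 < (Num.sqrt (d%:R : R))^-1 < 1.
Proof.
move=> d_gt1; have sqrt_gt1 : 1 < Num.sqrt (d%:R : R).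
  by rewrite -[X in X < _]sqrtr1 ltr_sqrt ?ltr1n ?ltr0n ?(ltnW d_gt1).
by rewrite invr_gt0 invf_lt1 ?(lt_trans ltr01) // andbT (lt_trans ltr01).
Qed.

Lemma natr_mul_inv_sqrt_sqr {R : rcfType} {d : nat} : (0 < d)%N ->
  d%:R * (Num.sqrt (d%:R : R))^-1 ^+ 2 = 1.
Proof. by move=> d_gt0; rewrite exprVn sqr_sqrtr ?ler0n // divff ?pnatr_eq0 -?lt0n. Qed.

Lemma sqr_le1_itv {R : realDomainType} (t : R) : t ^+ 2 <= 1 -> -1 <= t <= 1.
Proof. by move=> t2_le1; apply/andP; split; nra. Qed.

Lemma sum_cross_config {R : realType} {n : nat} (a : 'I_n -> 'rV[R]_n)
    (F : R -> \bar R) x :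
  (\sum_(i < n + n) F (dotv x (cross_config a i)) =
   \sum_(j < n) (F (dotv x (a j)) + F (- dotv x (a j))%R))%E.
Proof.
rewrite big_split_ord big_split /=; congr (_ + _)%E; apply: eq_bigr => j _.
  by rewrite /cross_config -[lshift n j]/(unsplit (inl j)) unsplitK.
by rewrite /cross_config -[rshift n j]/(unsplit (inr j)) unsplitK dotvNr.
Qed.

Section ExtendedKernel.
Context {R : realType} {n : nat} {g : R -> \bar R}.
Local Notation G := (fine \o g).
Hypothesis g_fin : forall t : R, -1 <= t < 1 -> g t \is a fin_num.
Hypothesis G_cont : {within `[-1, 1[, continuous G}.
Hypothesis g_left1 : g t @[t --> 1^'-] --> g 1.

Lemma g_EFin (t : R) : -1 <= t < 1 -> g t = (G t)%:E.
Proof. by move=> t11; rewrite /= fineK ?g_fin. Qed.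

Lemma G_cvgN1 : G (- t) @[t --> 1^'-] --> G (-1).
Proof.
have : {within `[-1, 0], continuous G}.
  apply: continuous_subspaceW G_cont => x /=; rewrite !in_itv /= => /andP[-> x_le0].
  exact: le_lt_trans x_le0 ltr01.
case/(continuous_within_itvP _ (ltrN10 R)) => _ /cvg_at_rightNP + _.
by rewrite opprK.
Qed.

Lemma sym_bound_at1 (c m : R) :
  (forall t : R, 0 < t < 1 -> c + m * t ^+ 2 <= G t + G (- t)) ->
  ((c + m)%:E <= g 1 + g (-1))%E.
Proof.
move=> bound.
rewrite (@g_EFin (-1)); last by rewrite lexx /=; lra.
have sq_cvg : t ^+ 2 @[t --> (1 : R)^'-] --> (1 ^+ 2 : R).
  exact: cvg_at_left_filter (@exprn_continuous R 2 1).
have : c + m * t ^+ 2 - G (- t) @[t --> 1^'-] --> (c + m * 1 ^+ 2 - G (-1) : R).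
  exact: cvgB (cvgD (cvg_cst c) (cvgM (cvg_cst m) sq_cvg)) G_cvgN1.
rewrite expr1n mulr1 => poly_cvg.
have lhs_cvg :
    (c + m * t ^+ 2 - G (- t))%:E @[t --> 1^'-] --> (c + m - G (-1))%:E.
  by apply: cvg_EFin; [exact: nearW | exact: poly_cvg].
have : ((c + m - G (-1))%:E <= g 1)%E.
  apply: (lee_cvg_to lhs_cvg g_left1); near=> t.
  have t_gt0 : 0 < t by near: t; exact: nbhs_left_gt.
  have t_lt1 : t < 1 by near: t; exact: nbhs_left_lt.
  have t11 : -1 <= t < 1 by rewrite t_lt1 andbT; lra.
  rewrite g_EFin //.
  by rewrite lee_fin; have /= := bound t (introT andP (conj t_gt0 t_lt1)); lra.
case: (g 1) => [r||] //=; rewrite ?lee_fin.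
  by move=> ?; lra.
by rewrite addye ?leey.
Unshelve. all: by end_near.
Qed.

Hypothesis G_derivable : forall t : R, -1 < t < 1 -> derivable G t 1.
Hypothesis dG_derivable : forall t : R, -1 < t < 1 -> derivable (derive1 G) t 1.
Hypothesis d2G_convex : convex_on_oo (-1) 1 (derive1n 2 G).

Lemma sym_tangent_ereal {s t : R} : 0 < s < 1 -> -1 <= t <= 1 ->
  ((sym_sum G s + sym_diff (derive1 G) s / (2 * s) * (t ^+ 2 - s ^+ 2))%:E
     <= g t + g (- t))%E.
Proof.
move=> s01 /andP[t_ge t_le].
have tangent u := sym_sum_tangent G_derivable dG_derivable d2G_convex s u s01.
set m := sym_diff (derive1 G) s / (2 * s) in tangent *.
have [t2_eq1|t2_neq1] := eqVneq (t ^+ 2) 1.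
  have -> : (g t + g (- t) = g 1 + g (-1))%E.
    by move/eqP: t2_eq1; rewrite sqrf_eq1 => /orP[]/eqP->; rewrite ?opprK // addeC.
  rewrite t2_eq1 (_ : _ + _ = sym_sum G s - m * s ^+ 2 + m); last by ring.
  apply: sym_bound_at1 => u /andP[u_gt0 u_lt1].
  have /= := tangent u (introT andP (conj (lt_trans (ltrN10 R) u_gt0) u_lt1)).
  by rewrite /sym_sum /=; lra.
have t11 : -1 < t < 1.
  move: t2_neq1; rewrite sqrf_eq1 negb_or => /andP[t_neq1 t_neqN1].
  by rewrite !lt_def t_neqN1 t_ge eq_sym t_neq1 t_le.
case/andP: (t11) => t_gtN1 t_lt1.
rewrite !g_EFin; first by rewrite -EFinD lee_fin; apply: tangent.
  by apply/andP; split; lra.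
by rewrite t_lt1 ltW.
Qed.

Lemma cross_config_sum_ge {s : R} {a : 'I_n -> 'rV[R]_n} {x} : 0 < s < 1 ->
  n%:R * s ^+ 2 = 1 -> (forall i j, dotv (a i) (a j) = (i == j)%:R) ->
  dotv x x = 1 ->
  ((n%:R * sym_sum G s)%:E <= \sum_(i < n + n) g (dotv x (cross_config a i)))%E.
Proof.
move=> s01 ns2 aa xx; rewrite sum_cross_config.
have parseval := orthonormal_parseval a x aa; rewrite xx in parseval.
set m := sym_diff (derive1 G) s / (2 * s).
have tangent_sum : (\sum_j (sym_sum G s + m * (dotv x (a j) ^+ 2 - s ^+ 2))%:E
    <= \sum_j (g (dotv x (a j)) + g (- dotv x (a j))%R))%E.
  apply: lee_sum => j _; apply: sym_tangent_ereal s01 _.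
  apply: sqr_le1_itv; rewrite -parseval (bigD1 j) //= lerDl.
  by apply: sumr_ge0 => i _; rewrite sqr_ge0.
apply: le_trans tangent_sum.
rewrite sumEFin lee_fin big_split /= -mulr_sumr sumrB parseval !sumr_const card_ord.
by rewrite -[s ^+ 2 *+ n]mulr_natl ns2 subrr mulr0 addr0 mulr_natl.
Qed.

Lemma cross_config_sum_at {s : R} {a : 'I_n -> 'rV[R]_n} : 0 < s < 1 ->
  n%:R * s ^+ 2 = 1 -> (forall i j, dotv (a i) (a j) = (i == j)%:R) ->
  exists2 x, dotv x x = 1 &
    \sum_(i < n + n) g (dotv x (cross_config a i)) = (n%:R * sym_sum G s)%:E.
Proof.
move=> /andP[s_gt0 s_lt1] ns2 aa; pose x := s *: \sum_j a j.
have xa i : dotv x (a i) = s.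
  rewrite dotvZl dotv_suml (bigD1 i) //= aa eqxx big1 ?addr0 ?mulr1 // => j /negbTE ji.
  by rewrite aa ji.
exists x.
  rewrite {1}/x dotvZl dotv_suml; under eq_bigr => j _ do rewrite dotvC xa.
  by rewrite sumr_const card_ord -mulr_natl mulrCA -expr2.
rewrite sum_cross_config; under eq_bigr => j _ do rewrite xa.
rewrite !g_EFin; last 2 first.
- by apply/andP; split; lra.
- by apply/andP; split; lra.
by rewrite -EFinD sumEFin sumr_const card_ord mulr_natl.
Qed.

Hypothesis d2G_ge0 : forall t : R, -1 < t < 1 -> 0 <= derive1n 2 G t.

Lemma antipodal_sum_le {s : R} {w : 'I_(n + n) -> 'rV[R]_n} {x} : s < 1 ->
  antipodal w -> (forall i, `|dotv x (w i)| <= s) ->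
  (\sum_i g (dotv x (w i)) <= (n%:R * sym_sum G s)%:E)%E.
Proof.
move=> s_lt1 [sg [sg_bij w_sg]] xw_le.
rewrite (eq_bigr (fun i => (G (dotv x (w i)))%:E)) => [|i _]; last first.
  apply: g_EFin; move: (xw_le i); rewrite ler_norml => /andP[? ?].
  by apply/andP; split; lra.
rewrite sumEFin lee_fin.
have sumN : \sum_i G (dotv x (w i)) = \sum_i G (- dotv x (w i)).
  by rewrite (reindex_inj (bij_inj sg_bij)); apply: eq_bigr => i _; rewrite w_sg dotvNr.
have : \sum_i sym_sum G (dotv x (w i)) <= \sum_(i < n + n) sym_sum G s.
  apply: ler_sum => i _; rewrite -sym_sum_norm.
  by apply: (sym_sum_mono G_derivable dG_derivable d2G_ge0); rewrite ?normr_ge0 ?xw_le.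
rewrite big_split /= -sumN sumr_const card_ord mulrnDr mulr_natl; lra.
Qed.

End ExtendedKernel.

Theorem corollary3p3 (R : realType) (d : nat) (g : R -> \bar R)
  (hd : (2 <= d)%N)
  (gfin : forall t : R, -1 <= t < 1 -> g t \is a fin_num)
  (gcont : {within `[-1, 1[, continuous (fine \o g)})
  (g1 : g t @[t --> 1^'-] --> g 1)
  (gder : forall t : R, -1 < t < 1 -> derivable (fine \o g) t 1)
  (gder2 : forall t : R, -1 < t < 1 -> derivable (derive1 (fine \o g)) t 1)
  (g2nn : forall t : R, -1 < t < 1 -> 0 <= derive1n 2 (fine \o g) t)
  (g2cvx : convex_on_oo (-1) 1 (derive1n 2 (fine \o g)))
  (w : 'I_(d + d) -> 'rV[R]_d) (a : 'I_d -> 'rV[R]_d)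
  (hw : on_sphere w) (hwa : antipodal w)
  (ha : forall i j, dotv (a i) (a j) = (i == j)%:R) :
  (Pg g w <= Pg g (cross_config a))%E /\
  Pg g (cross_config a) =
    ((d%:R : R)%:E * (g (1 / Num.sqrt (d%:R : R))%R + g (- (1 / Num.sqrt (d%:R : R)))%R))%E.
Proof.
rewrite div1r; set s := (Num.sqrt (d%:R : R))^-1.
have s01 : 0 < s < 1 := inv_sqrt_nat_gt0_lt1 hd.
have ds2 : d%:R * s ^+ 2 = 1 := natr_mul_inv_sqrt_sqr (ltnW hd).
have P_cross : Pg g (cross_config a) = (d%:R * sym_sum (fine \o g) s)%:E.
  apply/le_anti/andP; split.
    by have [x xx <-] := cross_config_sum_at gfin s01 ds2 ha; apply: Pg_le_sum.
  apply: Pg_ge => x xx.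
  by apply: (cross_config_sum_ge gfin gcont g1 gder gder2 g2cvx s01 ds2 ha xx).
split; last first.
  case/andP: (s01) => s_gt0 s_lt1.
  by rewrite P_cross !(g_EFin gfin) -?EFinD -?EFinM //; apply/andP; split; lra.
have w_neq0 i : w i != 0.
  apply/eqP => w0; have := hw i.
  by rewrite inE w0 /sphere /= dotv0l => /eqP; rewrite eq_sym oner_eq0.
have [b [bw wb]] := antipodal_pairs w_neq0 hwa.
have bb j : dotv (b j) (b j) = 1 by have [i ->] := bw j; have := hw i; rewrite inE.
have [x [xx xb]] := exists_unit_dotv_small (ltnW hd) bb.
have xw i : `|dotv x (w i)| <= s.
  by have [j [->|->]] := wb i; rewrite ?dotvNr ?normrN xb.
rewrite P_cross; apply: le_trans (Pg_le_sum g w x xx) _.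
by apply: (antipodal_sum_le gfin gder gder2 g2nn (andP s01).2 hwa xw).
Qed.
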